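(* Let $p$ be an odd prime, $k\in\{-1,1\}$, $n\ge 1$ an integer, and let $L_n^k(f,p)$ be a Legendre graph of order $n$ (with bijection $f$). Put $q=\lfloor n/p\rfloor$, $r=n-qp$ and $F=\{1,2,\dots,r\}$ (empty if $r=0$). For a vertex $v$ with $1\le f(v)\le qp$ let $$\omega^k(v)=\{\xi\in\{0,1,\dots,p-1\}:\ \xi\equiv f(v)+c \pmod p \text{ for some } c\in F,\ (\xi/p)=k\},$$ and for a vertex $v$ with $qp+1\le f(v)\le n$ let $\varepsilon(v)=f(v)-qp\in F$ and $$\pi^k(v)=\{\xi\in\{0,1,\dots,p-1\}:\ \xi\equiv f(v)+c \pmod p \text{ for some } c\in F\setminus\{\varepsilon(v)\},\ (\xi/p)=k\}.$$ Then for every vertex $v$: (i) if $1\le f(v)\le qp$ and $(2f(v)/p)=k$, then $\deg(v)=q\frac{p-1}{2}-1+|\omega^k(v)|$; (ii) if $1\le f(v)\le qp$ and either $(2f(v)/p)=-k$ or $f(v)\equiv 0\pmod p$, then $\deg(v)=q\frac{p-1}{2}+|\omega^k(v)|$; (iii) if $qp+1\le f(v)\le n$, then $\deg(v)=q\frac{p-1}{2}+|\pi^k(v)|$.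
   Context: For an odd prime $p$ and an integer $a$ not divisible by $p$, $(a/p)$ denotes the Legendre symbol: $1$ if $a$ is a quadratic residue mod $p$, $-1$ otherwise (it is not assigned the value $\pm1$ when $p\mid a$). For $k\in\{-1,1\}$, a Legendre graph $L_n^k(f,p)$ of order $n$ is a simple graph on an $n$-element vertex set $V$ together with a bijection $f:V\to\{1,2,\dots,n\}$, whose edges are exactly the pairs $\{a,b\}$ of distinct vertices with $p\nmid f(a)+f(b)$ and $((f(a)+f(b))/p)=k$. *)

From mathcomp Require Import all_boot all_order all_algebra.
Set Implicit Arguments. Unset Strict Implicit. Unset Printing Implicit Defensive.
Import Order.TTheory GRing.Theory Num.Theory.

(* When p | a the paper
   leaves it unassigned; we set it to 0, which is different from both
   admissible values of k, so "(a/p) = k" for k = +-1 implicitly entails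
   p \nmid a. *)
Definition legendre (p a : nat) : int :=
  if p %| a then 0%R
  else if [exists x : 'I_p, (x * x) %% p == a %% p] then 1%R else (-1)%R.

Definition bij_onto_1n (V : finType) (f : V -> nat) (n : nat) : Prop :=
  injective f /\ (forall v, 1 <= f v <= n) /\
  (forall m, 1 <= m <= n -> exists v, f v = m).

Definition legendre_adj (V : finType) (f : V -> nat) (p : nat) (k : int)
  (a b : V) : bool :=
  [&& a != b, ~~ (p %| f a + f b) & legendre p (f a + f b) == k].

Definition ldeg (V : finType) (f : V -> nat) (p : nat) (k : int) (v : V) : nat :=
  #|[set w : V | legendre_adj f p k v w]|.

Definition shifted_res (p : nat) (k : int) (x : nat) (C : pred nat) (r : nat)
  : {set 'I_p} :=
  [set xi : 'I_p | [exists c : 'I_r.+1, C (val c) && (0 < val c)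
                     && (val xi == (x + c) %% p)] && (legendre p xi == k)].

Definition omega (p : nat) (k : int) (r x : nat) : {set 'I_p} :=
  shifted_res p k x predT r.

Definition pik (p : nat) (k : int) (r x eps : nat) : {set 'I_p} :=
  shifted_res p k x (predC1 eps) r.

From mathcomp Require Import all_boot all_order all_algebra zify.
Import Order.TTheory GRing.Theory Num.Theory.

Set Implicit Arguments.
Unset Strict Implicit.
Unset Printing Implicit Defensive.

(* Vertices correspond to labels m in [1, n], and v is adjacent to the label
   m iff m <> f v and ((f v + m)/p) = k.  Cut [1, n] into q full blocks of p
   consecutive labels and a final block [qp+1, qp+r].  As m runs through a
   full block, f v + m runs through every residue mod p once, so each full
   block contributes the (p-1)/2 residues with symbol k; the label m = f v is
   excluded, which costs one exactly when f v lies in a full block and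
   ((2 f v)/p) = k.  The final block contributes the residues counted by
   omega^k(v) or pi^k(v). *)

Section Legendre.

Variable p : nat.

Lemma legendre_mod a : legendre p (a %% p) = legendre p a.
Proof. by rewrite /legendre /dvdn !modn_mod. Qed.

Lemma legendre_addnMl a q : legendre p (a + q * p) = legendre p a.
Proof. by rewrite -legendre_mod addnC modnMDl legendre_mod. Qed.

Lemma legendre_ndvd a (k : int) : k != 0%R -> legendre p a = k -> ~~ (p %| a).
Proof.
by move=> k_neq0; rewrite /legendre; case: ifP => // _ ak; rewrite -ak eqxx in k_neq0.
Qed.

Lemma legendre_eq1 a :
  (legendre p a == 1%R) = ~~ (p %| a) && [exists x : 'I_p, x * x %% p == a %% p].
Proof. by rewrite /legendre; case: ifP => //= _; case: ifP. Qed.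

End Legendre.

Lemma modDl_inj_window p x a m m' : a <= m < a + p -> a <= m' < a + p ->
  (x + m) %% p = (x + m') %% p -> m = m'.
Proof.
wlog le_mm' : m m' / m <= m'.
  move=> gen Hm Hm' E; case: (leqP m m') => [le|/ltnW le]; first exact: gen.
  by symmetry; apply: gen.
move=> Hm Hm' /eqP E.
have: p %| (x + m') - (x + m) by rewrite -eqn_mod_dvd ?leq_add2l // eq_sym.
rewrite subnDl => dvd_p; case: (posnP (m' - m)) => [|pos]; first by lia.
by have := dvdn_leq pos dvd_p; lia.
Qed.

Lemma count_modDl_window p x a (P : pred nat) : 0 < p ->
  count (fun m => P ((x + m) %% p)) (iota a p) = count P (iota 0 p).
Proof.
move=> p_gt0; set s := map (fun m => (x + m) %% p) (iota a p).
have s_uniq : uniq s.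
  rewrite map_inj_in_uniq ?iota_uniq // => m m'; rewrite !mem_iota.
  exact: modDl_inj_window.
have s_sub : {subset s <= iota 0 p}.
  by move=> _ /mapP [m _ ->]; rewrite mem_iota ltn_pmod.
have s_size : size (iota 0 p) <= size s by rewrite size_map !size_iota.
have [_ s_eq] := uniq_min_size s_uniq s_sub s_size.
by rewrite -(permP (uniq_perm s_uniq (iota_uniq 0 p) s_eq)) count_map.
Qed.

Lemma count_legendre_blocks p x q (k : int) : 0 < p ->
  count (fun m => legendre p (x + m) == k) (iota 1 (q * p))
  = q * count (fun a => legendre p a == k) (iota 0 p).
Proof.
move=> p_gt0; elim: q => [|q IHq]; first by rewrite mul0n.
rewrite mulSnr iotaD count_cat IHq mulSnr; congr (_ + _).
rewrite -(count_modDl_window x (1 + q * p) (fun a => legendre p a == k) p_gt0).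
by apply: eq_count => m /=; rewrite legendre_mod.
Qed.

Section QuadraticResidues.

Variable p : nat.
Hypotheses (p_prime : prime p) (p_odd : odd p).

Let p_gt0 : 0 < p. Proof. exact: prime_gt0. Qed.
Let p_half : p = 2 * ((p - 1) %/ 2) + 1.
Proof. by have := odd_double_half p; rewrite p_odd; lia. Qed.

Lemma sqr_mod_inj y z : 0 < y -> 0 < z -> y + z < p ->
  y * y %% p = z * z %% p -> y = z.
Proof.
wlog le_zy : y z / z <= y.
  move=> gen y0 z0 yz E; case: (leqP z y) => [le|/ltnW le]; first exact: gen.
  by symmetry; apply: gen; rewrite // addnC.
move=> y_gt0 z_gt0 yz /eqP E.
have: p %| y * y - z * z by rewrite -eqn_mod_dvd ?leq_mul.
have -> : y * y - z * z = (y - z) * (y + z) by rewrite mulnBl !mulnDr; lia.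
rewrite Euclid_dvdM // => /orP [dvd_p|dvd_p].
  case: (posnP (y - z)) => [|pos]; first by lia.
  by have := dvdn_leq pos dvd_p; lia.
have yz_gt0 : 0 < y + z by lia.
by have := dvdn_leq yz_gt0 dvd_p; lia.
Qed.

(* The nonzero squares mod p are exactly the y^2 mod p for 1 <= y <= (p-1)/2,
   since (p - y)^2 = y^2 mod p. *)
Lemma count_legendre1 :
  count (fun a => legendre p a == 1%R) (iota 0 p) = (p - 1) %/ 2.
Proof.
set h := (p - 1) %/ 2.
set residues := filter (fun a => legendre p a == 1%R) (iota 0 p).
set squares := map (fun y => y * y %% p) (iota 1 h).
have squares_uniq : uniq squares.
  rewrite map_inj_in_uniq ?iota_uniq // => y z; rewrite !mem_iota => Hy Hz.
  by apply: sqr_mod_inj; lia.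
have residues_squares : residues =i squares.
  move=> a; rewrite mem_filter mem_iota add0n legendre_eq1.
  apply/idP/idP.
    case/andP=> /andP [a_ndvd /existsP [x /eqP xa]] lt_ap.
    rewrite (modn_small lt_ap) in xa.
    have x_gt0 : 0 < x.
      by case: (posnP x) a_ndvd => // x0; rewrite -xa x0 mod0n dvdn0.
    apply/mapP; case: (leqP x h) => xh.
      by exists (nat_of_ord x); [rewrite mem_iota; lia | rewrite xa].
    exists (p - x); first by rewrite mem_iota; have := ltn_ord x; lia.
    rewrite -xa -(modnMDl (2 * x) ((p - x) * (p - x)) p).
    have -> : 2 * x * p + (p - x) * (p - x) = p * p + x * x.
      by have := ltn_ord x; nia.
    by rewrite modnMDl.
  case/mapP => y; rewrite mem_iota => Hy ->.
  rewrite ltn_pmod // leq0n !andbT; apply/andP; split.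
    rewrite /dvdn modn_mod -/(dvdn p (y * y)) Euclid_dvdM // orbb.
    have y_gt0 : 0 < y by lia.
    by apply/negP => /(dvdn_leq y_gt0); lia.
  have lt_yp : y < p by lia.
  by apply/existsP; exists (Ordinal lt_yp); rewrite /= modn_mod.
rewrite -size_filter -/residues.
have := uniq_perm (filter_uniq _ (iota_uniq 0 p)) squares_uniq residues_squares.
by move/perm_size ->; rewrite size_map size_iota.
Qed.

Lemma count_legendreN1 :
  count (fun a => legendre p a == (-1)%R) (iota 0 p) = (p - 1) %/ 2.
Proof.
have drop0 (k : int) : k != 0%R -> count (fun a => legendre p a == k) (iota 0 p)
    = count (fun a => legendre p a == k) (iota 1 (p - 1)).
  have -> : iota 0 p = 0 :: iota 1 (p - 1) by rewrite -[in LHS](subnK p_gt0) addn1.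
  by move=> k_neq0; rewrite /= /legendre dvdn0 eq_sym (negbTE k_neq0).
have nonres_eq : count (predC (fun a => legendre p a == 1%R)) (iota 1 (p - 1))
    = count (fun a => legendre p a == (-1)%R) (iota 1 (p - 1)).
  apply: eq_in_count => a; rewrite mem_iota => Ha /=.
  have a_gt0 : 0 < a by lia.
  have a_ndvd : ~~ (p %| a) by apply/negP => /(dvdn_leq a_gt0); lia.
  by rewrite /legendre (negbTE a_ndvd); case: ifP.
have := count_predC (fun a => legendre p a == 1%R) (iota 1 (p - 1)).
have := count_legendre1; have := p_half.
by rewrite !drop0 // size_iota nonres_eq; lia.
Qed.

Lemma count_legendre_period (k : int) : k = 1%R \/ k = (-1)%R ->
  count (fun a => legendre p a == k) (iota 0 p) = (p - 1) %/ 2.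
Proof. by case=> ->; [exact: count_legendre1 | exact: count_legendreN1]. Qed.

End QuadraticResidues.

Lemma count_predC1_uniq (T : eqType) (P : pred T) x (s : seq T) : uniq s ->
  count (fun m => (m != x) && P m) s + ((x \in s) && P x) = count P s.
Proof.
move=> s_uniq; rewrite -[RHS]size_filter.
rewrite -(count_predC (pred1 x) (filter P s)) addnC.
rewrite count_uniq_mem ?filter_uniq // mem_filter andbC count_filter.
by congr (_ + _); apply: eq_count => m /=; rewrite andbC.
Qed.

Lemma card_val_in_seq p (s : seq nat) : uniq s -> all (fun y => y < p) s ->
  #|[set xi : 'I_p | val xi \in s]| = size s.
Proof.
move=> s_uniq s_lt.
have -> : [set xi : 'I_p | val xi \in s] = [set xi in pmap insub s].
  by apply/setP => xi; rewrite !inE mem_pmap_sub.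
rewrite cardsE (card_uniqP (pmap_sub_uniq _ s_uniq)) size_pmap_sub.
by apply/eqP; rewrite -all_count.
Qed.

Lemma card_shifted_res p k x (C : pred nat) r : 0 < p -> r < p ->
  #|shifted_res p k x C r| = count (fun c => C c && (legendre p (x + c) == k)) (iota 1 r).
Proof.
move=> p_gt0 lt_rp.
set shifts := filter (fun c => C c && (legendre p (x + c) == k)) (iota 1 r).
have -> : shifted_res p k x C r
    = [set xi : 'I_p | val xi \in map (fun c => (x + c) %% p) shifts].
  apply/setP => xi; rewrite !inE; apply/idP/idP.
    case/andP => /existsP [c /andP [/andP [Cc c_gt0] /eqP xi_c]] xi_k.
    apply/mapP; exists (nat_of_ord c) => //.
    rewrite mem_filter Cc -legendre_mod -xi_c xi_k mem_iota /=.
    by move: c_gt0 (ltn_ord c) => /=; lia.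
  case/mapP => c; rewrite mem_filter mem_iota => /andP [/andP [Cc xc_k] Hc] /= xi_c.
  have lt_cr : c < r.+1 by lia.
  rewrite xi_c legendre_mod xc_k andbT; apply/existsP; exists (Ordinal lt_cr).
  by rewrite /= Cc eqxx andbT; lia.
rewrite card_val_in_seq ?size_map ?size_filter //.
  rewrite map_inj_in_uniq ?filter_uniq ?iota_uniq // => c c'.
  rewrite !mem_filter !mem_iota => /andP [_ Hc] /andP [_ Hc'].
  by apply: (@modDl_inj_window p x 1); lia.
by apply/allP => _ /mapP [c _ ->]; rewrite ltn_pmod.
Qed.

Definition tail_count p k q r x :=
  count (fun c => (q * p + c != x) && (legendre p (x + c) == k)) (iota 1 r).

Lemma tail_count_omega p k q r x : 0 < p -> r < p -> x <= q * p ->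
  tail_count p k q r x = #|omega p k r x|.
Proof.
move=> p_gt0 lt_rp le_x; rewrite card_shifted_res //.
apply: eq_in_count => c; rewrite mem_iota => Hc /=.
by have -> : q * p + c != x by apply/eqP; lia.
Qed.

Lemma tail_count_pik p k q r x : 0 < p -> r < p -> q * p < x ->
  tail_count p k q r x = #|pik p k r x (x - q * p)|.
Proof.
move=> p_gt0 lt_rp lt_x; rewrite card_shifted_res //.
by apply: eq_count => c /=; congr (_ && _); apply/idP/idP => /eqP ne; apply/eqP; lia.
Qed.

Section LegendreGraphDegree.

Variables (V : finType) (f : V -> nat) (n p : nat) (k : int).
Hypotheses (f_bij : bij_onto_1n f n) (k_neq0 : k != 0%R).

Lemma ldeg_count v :
  ldeg f p k v = count (fun m => (m != f v) && (legendre p (f v + m) == k)) (iota 1 n).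
Proof.
have [f_inj [f_rng f_onto]] := f_bij.
set P := fun m => (m != f v) && (legendre p (f v + m) == k).
rewrite /ldeg -sum1_card.
have -> : \sum_(w in [set w | legendre_adj f p k v w]) 1
    = \sum_(w <- index_enum V | P (f w)) 1.
  apply: eq_bigl => w; rewrite inE /legendre_adj /P (inj_eq f_inj) [w == v]eq_sym.
  case: (legendre p (f v + f w) =P k) => [vw_k|]; last by rewrite !andbF.
  by rewrite (legendre_ndvd k_neq0 vw_k).
rewrite -(big_map f P (fun _ => 1)) -sum1_count; apply/perm_big/uniq_perm.
- by rewrite map_inj_uniq // index_enum_uniq.
- exact: iota_uniq.
move=> m; rewrite mem_iota; apply/mapP/idP => [[w _ ->]|Hm].
  by have := f_rng w; lia.
by have [w <-] := f_onto m ltac:(lia); exists w; rewrite ?mem_index_enum.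
Qed.

Lemma ldeg_blocks v q r : 0 < p -> n = q * p + r ->
  ldeg f p k v + ((1 <= f v <= q * p) && (legendre p (2 * f v) == k))
  = q * count (fun a => legendre p a == k) (iota 0 p) + tail_count p k q r (f v).
Proof.
move=> p_gt0 n_qpr; set x := f v.
rewrite ldeg_count n_qpr iotaD count_cat -addnA [_ + (_ && _)]addnC addnA.
have -> : legendre p (2 * x) = legendre p (x + x) by rewrite addnn -mul2n.
rewrite -[1 <= x <= q * p]/(1 <= x < 1 + q * p) -mem_iota.
rewrite count_predC1_uniq ?iota_uniq //.
rewrite count_legendre_blocks //; congr (_ + _).
rewrite addnC iotaDl count_map; apply: eq_count => c /=.
by rewrite (_ : x + (q * p + c) = x + c + q * p) ?legendre_addnMl //; lia.
Qed.

End LegendreGraphDegree.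

Local Open Scope ring_scope.

Theorem lemma3p2 (p : nat) (k : int) (n : nat) (V : finType) (f : V -> nat) :
  prime p -> odd p -> (k = 1 \/ k = -1) -> (1 <= n)%N -> bij_onto_1n f n ->
  let q := (n %/ p)%N in
  let r := (n - q * p)%N in
  forall v : V,
    [/\ ((1 <= f v <= q * p)%N -> legendre p (2 * f v) = k ->
           (ldeg f p k v)%:Z
             = (q * ((p - 1) %/ 2))%:Z - 1 + (#|omega p k r (f v)|)%:Z),
        ((1 <= f v <= q * p)%N ->
           (legendre p (2 * f v) = - k \/ (p %| f v)%N) ->
           (ldeg f p k v)%:Z
             = (q * ((p - 1) %/ 2))%:Z + (#|omega p k r (f v)|)%:Z)
      & ((q * p + 1 <= f v <= n)%N ->
           (ldeg f p k v)%:Z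
             = (q * ((p - 1) %/ 2))%:Z
               + (#|pik p k r (f v) (f v - q * p)|)%:Z)].
Proof.
move=> p_prime p_odd k_pm1 _ f_bij q r v.
have p_gt0 : (0 < p)%N by exact: prime_gt0.
have k_neq0 : k != 0 by case: k_pm1 => ->.
have lt_rp : (r < p)%N by rewrite /r /q {1}(divn_eq n p) addKn ltn_pmod.
have n_qpr : n = (q * p + r)%N by rewrite /r /q; have := leq_divM n p; lia.
have := ldeg_blocks f_bij k_neq0 v p_gt0 n_qpr.
rewrite count_legendre_period // => deg_eq.
split=> [fv_low fv_k|fv_low fv_nk|fv_high].
- have le_fv : (f v <= q * p)%N by case/andP: fv_low.
  rewrite fv_low fv_k eqxx tail_count_omega // in deg_eq.
  by rewrite addrAC -PoszD -deg_eq PoszD addrK.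
- have le_fv : (f v <= q * p)%N by case/andP: fv_low.
  have fv_nk' : (legendre p (2 * f v) == k) = false.
    case: fv_nk => [->|dvd_p]; first by case: k_pm1 => ->.
    by apply/negP => /eqP /(legendre_ndvd k_neq0); rewrite dvdn_mull.
  by rewrite fv_nk' andbF addn0 tail_count_omega // in deg_eq; rewrite deg_eq PoszD.
- have lt_fv : (q * p < f v)%N by case/andP: fv_high; rewrite addn1.
  have fv_low : (1 <= f v <= q * p)%N = false by rewrite (leqNgt (f v)) lt_fv andbF.
  by rewrite fv_low addn0 tail_count_pik // in deg_eq; rewrite deg_eq PoszD.
Qed.
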